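(* Let $a>0$ and $x_0=\frac{a}{a+1}$. For every $x\in[0,1]$ the series $$1-\sum_{n\ge1}(an)_{n-1}\frac{\bigl(x^a(1-x)\bigr)^n}{n!}$$ converges absolutely, and its value equals $g_a(x)$. Consequently this series equals $f_a(x)$ for $0\le x\le x_0$ and equals $x$ for $x_0\le x\le1$.
   Context: For $c$ real and integer $n$, $(c)_n=\Gamma(c+n)/\Gamma(c)$ is the Pochhammer symbol; in particular $(an)_{n-1}=\Gamma(an+n-1)/\Gamma(an)$ for $n\ge1$. For $a>0$ let $\phi_a(x)=x^a-x^{a+1}$ on $[0,1]$; it is strictly increasing on $[0,x_0]$ and strictly decreasing on $[x_0,1]$ with $x_0=a/(a+1)$. Let $l_a,r_a$ be the restrictions of $\phi_a$ to $[0,x_0]$ and $[x_0,1]$. Define $f_a(x)=r_a^{-1}(\phi_a(x))$ for $0\le x\le x_0$, $f_a(x)=l_a^{-1}(\phi_a(x))$ for $x_0\le x\le 1$ (the unique involution with $\phi_a\circ f_a=\phi_a$, $f_a\ne\mathrm{id}$ off $x_0$), and $g_a(x)=r_a^{-1}(\phi_a(x))$ for $0\le x\le1$. *)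

From Stdlib Require Import Reals Lra ClassicalEpsilon.
From Coquelicot Require Import Coquelicot.
Open Scope R_scope.

Fixpoint poch (c : R) (m : nat) : R :=
  match m with
  | O => 1
  | S k => poch c k * (c + INR k)
  end.

(* real power x^a for x >= 0, with the convention 0^a = 0 (a > 0). *)
Definition rpow (x a : R) : R :=
  if Req_EM_T x 0 then 0 else Rpower x a.

Definition phi (a x : R) : R := rpow x a - rpow x (a + 1).

Definition x0 (a : R) : R := a / (a + 1).

Definition r_inv (a t : R) : R :=
  epsilon (inhabits 0) (fun y => x0 a <= y <= 1 /\ phi a y = t).

Definition l_inv (a t : R) : R :=
  epsilon (inhabits 0) (fun y => 0 <= y <= x0 a /\ phi a y = t).

Definition f_a (a x : R) : R :=
  if Rle_dec x (x0 a) then r_inv a (phi a x) else l_inv a (phi a x).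

Definition g_a (a x : R) : R := r_inv a (phi a x).

Definition term (a x : R) (n : nat) : R :=
  poch (a * INR n) (n - 1) * (rpow x a * (1 - x)) ^ n / INR (Factorial.fact n).

(** Write [u = phi_a x = x^a (1 - x)] and [F u = sum_n c_n u^n] with
    [c_n = (a n)_(n-1) / n!].  Since [phi_a y = h_a (1 - y)] for
    [h_a w = w (1 - w)^a], it suffices that [F] inverts [h_a] on its
    increasing branch [[0, 1/(a+1)]], whose maximal value is [h_max].
    - Algebra: the Hagen–Rothe convolution identity (a polynomial identity in
      one parameter, checked at all naturals) gives
      [sum_k c_k ((a+1)(n-k) - 1) c_(n-k) = (n - 1) c_n], i.e. [F] formally
      solves [u F' (1 - (a+1) F) = F (1 - F)].
    - Comparison: when [F 0 = 0], [F'(0) = 1], the sign of the residual of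
      this equation decides the monotonicity of [h_a (F u) / u], which tends
      to 1 at 0; subsolutions thus stay below [1/(a+1)] up to [h_max].
    - Analysis: the truncations of the series are subsolutions, so their
      values at [h_max] are at most [1/(a+1)]; the series therefore converges
      on [[0, h_max]], where it solves the equation and inverts [h_a].
    - Finally [1 - F u] is the unique solution of [phi_a y = u] in
      [[x0, 1]], that is [r_a^(-1) u]. *)

From Stdlib Require Import Reals Lra Lia ClassicalEpsilon.
From Coquelicot Require Import Coquelicot.
Open Scope R_scope.

Inductive poly_fun : nat -> (R -> R) -> Prop :=
| poly_fun_const (c : R) (f : R -> R) :
    (forall x, f x = c) -> poly_fun 0 f
| poly_fun_horner n (c : R) (q f : R -> R) :
    poly_fun n q -> (forall x, f x = c + x * q x) -> poly_fun (S n) f.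

Lemma poly_fun_ext n f g : poly_fun n f -> (forall x, g x = f x) -> poly_fun n g.
Proof.
  intros [c f' Hf | m c q f' Hq Hf] E.
  - apply (poly_fun_const c); intros x; rewrite E; auto.
  - apply (poly_fun_horner m c q); auto; intros x; rewrite E; auto.
Qed.

Lemma poly_fun_cst n c : poly_fun n (fun _ => c).
Proof.
  revert c; induction n as [|n IH]; intros c.
  - now apply (poly_fun_const c).
  - apply (poly_fun_horner n c (fun _ => 0)); [apply IH | intros; ring].
Qed.

Lemma poly_fun_weaken n m f : (n <= m)%nat -> poly_fun n f -> poly_fun m f.
Proof.
  intros Hnm Hf; revert m Hnm.
  induction Hf as [c f Hf | n c q f Hq IH Hf]; intros m Hnm.
  - apply (poly_fun_ext m (fun _ => c)); [apply poly_fun_cst | auto].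
  - destruct m as [|m]; [lia|].
    apply (poly_fun_horner m c q); [apply IH; lia | auto].
Qed.

Lemma poly_fun_add n f g :
  poly_fun n f -> poly_fun n g -> poly_fun n (fun x => f x + g x).
Proof.
  intros Hf; revert g; induction Hf as [c f Hf | n c q f Hq IH Hf]; intros g Hg.
  - inversion Hg as [d g' Hg' |]; subst.
    apply (poly_fun_const (c + d)); intros x; rewrite Hf, Hg'; auto.
  - inversion Hg as [| n' d r g' Hr Hg']; subst.
    apply (poly_fun_horner n (c + d) (fun x => q x + r x)); [apply IH; auto|].
    intros x; rewrite Hf, Hg'; ring.
Qed.

Lemma poly_fun_scal n k f : poly_fun n f -> poly_fun n (fun x => k * f x).
Proof.
  induction 1 as [c f Hf | n c q f Hq IH Hf].
  - apply (poly_fun_const (k * c)); intros x; rewrite Hf; auto.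
  - apply (poly_fun_horner n (k * c) (fun x => k * q x)); auto.
    intros x; rewrite Hf; ring.
Qed.

Lemma poly_fun_mul_linear n d f :
  poly_fun n f -> poly_fun (S n) (fun x => f x * (x + d)).
Proof.
  induction 1 as [c f Hf | n c q f Hq IH Hf].
  - apply (poly_fun_horner 0 (c * d) (fun _ => c)); [apply poly_fun_cst|].
    intros x; rewrite Hf; ring.
  - apply (poly_fun_horner (S n) (c * d) (fun x => c + q x * (x + d))).
    + apply (poly_fun_add (S n) (fun _ => c)); [apply poly_fun_cst | auto].
    + intros x; rewrite Hf; ring.
Qed.

Lemma poly_fun_shift n d f : poly_fun n f -> poly_fun n (fun x => f (x + d)).
Proof.
  induction 1 as [c f Hf | n c q f Hq IH Hf].
  - now apply (poly_fun_const c).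
  - apply (poly_fun_ext (S n) (fun x => c + q (x + d) * (x + d))).
    + apply (poly_fun_add (S n) (fun _ => c)); [apply poly_fun_cst|].
      now apply poly_fun_mul_linear.
    + intros x; rewrite Hf; ring.
Qed.

Lemma poly_fun_sum n F N :
  (forall k, (k <= N)%nat -> poly_fun n (F k)) ->
  poly_fun n (fun x => sum_f_R0 (fun k => F k x) N).
Proof.
  induction N as [|N IH]; intros H; simpl.
  - now apply (poly_fun_ext n (F 0%nat)); [apply H|].
  - apply (poly_fun_add n (fun x => sum_f_R0 (fun k => F k x) N)); auto.
Qed.

Lemma poly_fun_zero_of_roots n f :
  poly_fun n f -> (forall j, (j <= n)%nat -> f (INR j) = 0) -> forall x, f x = 0.
Proof.
  revert f; induction n as [|n IH]; intros f Hf Hroots x.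
  - inversion Hf as [c f' Hc |]; subst.
    rewrite Hc, <- (Hc (INR 0)); apply Hroots; lia.
  - inversion Hf as [| n' c q f' Hq Hfq]; subst.
    assert (Hc : c = 0) by (specialize (Hroots 0%nat ltac:(lia)); rewrite Hfq in Hroots;
                            simpl in Hroots; lra).
    assert (Hq1 : forall y, q (y + 1) = 0).
    { apply (IH (fun y => q (y + 1))); [now apply poly_fun_shift|].
      intros j Hj; specialize (Hroots (S j) ltac:(lia)).
      rewrite Hfq, Hc, S_INR in Hroots; pose proof (pos_INR j).
      assert (Hprod : (INR j + 1) * q (INR j + 1) = 0) by lra.
      destruct (Rmult_integral _ _ Hprod); lra. }
    rewrite Hfq, Hc; replace x with ((x - 1) + 1) by ring; rewrite Hq1; ring.
Qed.

Fixpoint falling (c : R) (m : nat) : R :=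
  match m with O => 1 | S k => falling c k * (c - INR k) end.

Lemma falling_S_shift c k : falling c (S k) = c * falling (c - 1) k.
Proof.
  induction k as [|k IH]; [simpl; ring|].
  change (falling c (S (S k))) with (falling c (S k) * (c - INR (S k))).
  rewrite IH; simpl falling; rewrite S_INR; ring.
Qed.

Lemma falling_poly_fun d k : poly_fun k (fun x => falling (x + d) k).
Proof.
  revert d; induction k as [|k IH]; intros d; [now apply (poly_fun_const 1)|].
  apply (poly_fun_ext (S k) (fun x => falling (x + d) k * (x + (d - INR k)))).
  - now apply poly_fun_mul_linear.
  - intros x; simpl; ring.
Qed.

Lemma INR_fact_pos n : 0 < INR (Factorial.fact n).
Proof. apply lt_0_INR, Factorial.lt_O_fact. Qed.

Lemma INR_fact_S n : INR (Factorial.fact (S n)) = INR (S n) * INR (Factorial.fact n).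
Proof. apply mult_INR. Qed.

(** The two families of the Hagen–Rothe identity, for a step [s]:
    [binom_s s y n = binom(y + s n, n)] and
    [abel_s s x n = x / (x + s n) * binom(x + s n, n)] (with value 1 at n = 0). *)
Definition binom_s (s y : R) (n : nat) : R :=
  falling (y + s * INR n) n / INR (Factorial.fact n).

Definition abel_s (s x : R) (n : nat) : R :=
  match n with
  | O => 1
  | S m => x * falling (x + s * INR n - 1) m / INR (Factorial.fact n)
  end.

Lemma binom_s_diff s y m :
  binom_s s y (S m) - binom_s s (y - 1) (S m) = binom_s s (y + s - 1) m.
Proof.
  unfold binom_s; rewrite falling_S_shift.
  change (falling (y - 1 + s * INR (S m)) (S m))
    with (falling (y - 1 + s * INR (S m)) m * (y - 1 + s * INR (S m) - INR m)).
  replace (y + s * INR (S m) - 1) with (y + s - 1 + s * INR m) by (rewrite S_INR; ring).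
  replace (y - 1 + s * INR (S m)) with (y + s - 1 + s * INR m) by (rewrite S_INR; ring).
  rewrite INR_fact_S, S_INR; pose proof (INR_fact_pos m); pose proof (pos_INR m).
  field; lra.
Qed.

Lemma abel_s_diff s x k :
  abel_s s x (S k) - abel_s s (x - 1) (S k) = abel_s s (x + s - 1) k.
Proof.
  destruct k as [|m]; [simpl; field|].
  unfold abel_s; rewrite falling_S_shift.
  change (falling (x - 1 + s * INR (S (S m)) - 1) (S m))
    with (falling (x - 1 + s * INR (S (S m)) - 1) m
          * (x - 1 + s * INR (S (S m)) - 1 - INR m)).
  replace (x + s * INR (S (S m)) - 1 - 1) with (x + s - 1 + s * INR (S m) - 1)
    by (rewrite !S_INR; ring).
  replace (x - 1 + s * INR (S (S m)) - 1) with (x + s - 1 + s * INR (S m) - 1)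
    by (rewrite !S_INR; ring).
  rewrite (INR_fact_S (S m)); pose proof (INR_fact_pos (S m)); pose proof (pos_INR m).
  rewrite !S_INR in *; field; lra.
Qed.

Lemma abel_s_poly_fun s k : poly_fun k (fun x => abel_s s x k).
Proof.
  destruct k as [|m]; [now apply (poly_fun_const 1)|].
  apply (poly_fun_ext (S m) (fun x => / INR (Factorial.fact (S m))
           * (falling (x + (s * INR (S m) - 1)) m * (x + 0)))).
  - apply poly_fun_scal, poly_fun_mul_linear, falling_poly_fun.
  - intros x; unfold abel_s.
    replace (x + s * INR (S m) - 1) with (x + (s * INR (S m) - 1)) by ring.
    unfold Rdiv; ring.
Qed.

Lemma binom_s_poly_fun s y n : poly_fun n (fun x => binom_s s (x + y) n).
Proof.
  apply (poly_fun_ext n (fun x => / INR (Factorial.fact n) * falling (x + (y + s * INR n)) n)).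
  - apply poly_fun_scal, falling_poly_fun.
  - intros x; unfold binom_s.
    replace (x + y + s * INR n) with (x + (y + s * INR n)) by ring; unfold Rdiv; ring.
Qed.

(** Both sides are polynomials of degree
    [n] in [x]; their difference [D] satisfies [D x = D (x - 1)] by the
    recurrences and induction on [n], and [D 0 = 0], so [D] vanishes at all
    naturals and hence identically. *)
Lemma hagen_rothe s n : forall x y,
  sum_f_R0 (fun k => abel_s s x k * binom_s s y (n - k)) n = binom_s s (x + y) n.
Proof.
  induction n as [|m IH]; intros x y; [unfold binom_s; simpl; field|].
  set (D := fun x => sum_f_R0 (fun k => abel_s s x k * binom_s s y (S m - k)) (S m)
                     - binom_s s (x + y) (S m)).
  assert (Hstep : forall z, D z = D (z - 1)).
  { intros z; unfold D.
    assert (Hsum : sum_f_R0 (fun k => abel_s s z k * binom_s s y (S m - k)) (S m)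
                 - sum_f_R0 (fun k => abel_s s (z - 1) k * binom_s s y (S m - k)) (S m)
                 = binom_s s (z + s - 1 + y) m).
    { rewrite <- minus_sum, decomp_sum by lia; simpl pred.
      rewrite (sum_eq _ (fun k => abel_s s (z + s - 1) k * binom_s s y (m - k))).
      - rewrite IH; simpl abel_s; ring.
      - intros i Hi; rewrite <- abel_s_diff.
        replace (S m - S i)%nat with (m - i)%nat by lia; ring. }
    pose proof (binom_s_diff s (z + y) m).
    replace (z - 1 + y) with (z + y - 1) by ring.
    replace (z + s - 1 + y) with (z + y + s - 1) in Hsum by ring.
    lra. }
  assert (Hnat : forall j, D (INR j) = 0).
  { induction j as [|j IHj].
    - unfold D; rewrite decomp_sum by lia; simpl pred.
      rewrite (sum_eq _ (fun _ => 0)) by (intros; unfold abel_s, Rdiv; simpl; ring).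
      rewrite sum_cte, Nat.sub_0_r; change (INR 0) with 0; simpl abel_s.
      rewrite Rplus_0_l; ring.
    - rewrite Hstep, S_INR; replace (INR j + 1 - 1) with (INR j) by ring; exact IHj. }
  assert (Hpoly : poly_fun (S m) D).
  { apply (poly_fun_ext (S m) (fun x =>
      sum_f_R0 (fun k => (fun k x => binom_s s y (S m - k) * abel_s s x k) k x) (S m)
      + (-1) * binom_s s (x + y) (S m))).
    - apply poly_fun_add.
      + apply poly_fun_sum; intros k Hk.
        apply poly_fun_scal, (poly_fun_weaken k); [auto | apply abel_s_poly_fun].
      + apply poly_fun_scal, binom_s_poly_fun.
    - intros z; unfold D.
      rewrite (sum_eq (fun k => abel_s s z k * binom_s s y (S m - k))
                 (fun k => binom_s s y (S m - k) * abel_s s z k)) by (intros; ring).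
      ring. }
  pose proof (poly_fun_zero_of_roots (S m) D Hpoly (fun j _ => Hnat j) x); unfold D in *; lra.
Qed.

Definition coef (a : R) (n : nat) : R :=
  match n with
  | O => 0
  | S m => poch (a * INR (S m)) m / INR (Factorial.fact (S m))
  end.

Lemma poch_falling c m : poch c m = falling (c + INR m - 1) m.
Proof.
  induction m as [|m IH]; [reflexivity|].
  simpl poch; rewrite IH, falling_S_shift, S_INR.
  replace (c + (INR m + 1) - 1 - 1) with (c + INR m - 1) by ring; ring.
Qed.

Lemma coef_nonneg a n : 0 < a -> 0 <= coef a n.
Proof.
  intros Ha; destruct n as [|m]; [simpl; lra|].
  change (coef a (S m)) with (poch (a * INR (S m)) m / INR (Factorial.fact (S m))).
  assert (Hpoch : forall c k, 0 < c -> 0 < poch c k).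
  { intros c k Hc; induction k as [|k IH]; simpl; [lra|].
    pose proof (pos_INR k); apply Rmult_lt_0_compat; lra. }
  left; apply Rdiv_lt_0_compat; [apply Hpoch | apply INR_fact_pos].
  apply Rmult_lt_0_compat; [lra | apply lt_0_INR; lia].
Qed.

Lemma coef_1 a : coef a 1 = 1.
Proof. simpl; field. Qed.

Lemma abel_s_coef a k :
  abel_s (a + 1) (-1) k = (if Nat.eqb k 0 then 1 else 0) - coef a k.
Proof.
  destruct k as [|m]; [simpl; ring|].
  unfold abel_s, coef; rewrite poch_falling.
  replace (-1 + (a + 1) * INR (S m) - 1) with (a * INR (S m) + INR m - 1)
    by (rewrite S_INR; ring).
  simpl Nat.eqb; unfold Rdiv; ring.
Qed.

Lemma binom_s_coef_1 a j :
  binom_s (a + 1) (-1) j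
  = (if Nat.eqb j 0 then 1 else 0) + ((a + 1) * INR j - 1) * coef a j.
Proof.
  destruct j as [|m]; [unfold binom_s; simpl; field|].
  unfold binom_s, coef; rewrite poch_falling, falling_S_shift.
  replace (-1 + (a + 1) * INR (S m) - 1) with (a * INR (S m) + INR m - 1)
    by (rewrite S_INR; ring).
  simpl Nat.eqb; unfold Rdiv; ring.
Qed.

Lemma binom_s_coef_2 a m :
  binom_s (a + 1) (-2) (S m) = (a * INR (S m) - 1) * coef a (S m).
Proof.
  unfold binom_s, coef; rewrite poch_falling.
  change (falling (-2 + (a + 1) * INR (S m)) (S m))
    with (falling (-2 + (a + 1) * INR (S m)) m * (-2 + (a + 1) * INR (S m) - INR m)).
  replace (-2 + (a + 1) * INR (S m)) with (a * INR (S m) + INR m - 1)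
    by (rewrite S_INR; ring).
  rewrite S_INR; unfold Rdiv; ring.
Qed.

Lemma sum_kronecker j N X :
  (j <= N)%nat -> sum_f_R0 (fun k => if Nat.eqb k j then X else 0) N = X.
Proof.
  induction N as [|N IH]; intros Hj.
  - replace j with 0%nat by lia; reflexivity.
  - rewrite tech5; destruct (Nat.eqb_spec (S N) j) as [<- | Hne].
    + rewrite sum_eq_R0; [ring|].
      intros k Hk; destruct (Nat.eqb_spec k (S N)); [lia | reflexivity].
    + rewrite IH by lia; ring.
Qed.

(** The convolution identity behind the differential equation:
    [sum_k c_k ((a+1)(n-k) - 1) c_(n-k) = (n - 1) c_n].  It is the
    Hagen–Rothe identity with step [a + 1] at [x = y = -1]. *)
Lemma coef_convolution a n :
  sum_f_R0 (fun k => coef a k * (((a + 1) * INR (n - k) - 1) * coef a (n - k))) n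
  = (INR n - 1) * coef a n.
Proof.
  destruct n as [|m]; [simpl; ring|].
  set (e := fun j => ((a + 1) * INR j - 1) * coef a j).
  assert (Hterm : forall k, (k <= S m)%nat ->
    abel_s (a + 1) (-1) k * binom_s (a + 1) (-1) (S m - k)%nat
    = (if Nat.eqb k 0 then e (S m) else 0)
      - (if Nat.eqb k (S m) then coef a (S m) else 0)
      - coef a k * e (S m - k)%nat).
  { intros k Hk; rewrite abel_s_coef, binom_s_coef_1; unfold e.
    destruct (Nat.eqb_spec k 0) as [-> | Hk0].
    - rewrite Nat.sub_0_r; change (coef a 0) with 0; simpl Nat.eqb; cbv iota; ring.
    - destruct (Nat.eqb_spec k (S m)) as [-> | HkS].
      + rewrite Nat.sub_diag; change (coef a 0) with 0; simpl Nat.eqb; cbv iota; ring.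
      + replace (Nat.eqb (S m - k) 0) with false by (symmetry; apply Nat.eqb_neq; lia).
        ring. }
  pose proof (hagen_rothe (a + 1) (S m) (-1) (-1)) as HR.
  replace (-1 + -1) with (-2) in HR by ring.
  rewrite (sum_eq _ _ _ Hterm), !minus_sum, !sum_kronecker, binom_s_coef_2 in HR by lia.
  unfold e in HR; rewrite S_INR in *; lra.
Qed.

Lemma Rpower_pos x y : 0 < Rpower x y.
Proof. apply exp_pos. Qed.

(** [h_a a w = w (1 - w)^a]: through [w = 1 - y] it is the function [phi_a],
    and the sum of the series will be the inverse of [h_a] on [[0, 1/(a+1)]].
    [h_a] increases on [[0, w_max a]] and decreases on [[w_max a, 1)]. *)
Definition h_a (a w : R) : R := w * Rpower (1 - w) a.

Definition w_max (a : R) : R := / (a + 1).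

Definition h_max (a : R) : R := h_a a (w_max a).

Lemma w_max_bounds a : 0 < a -> 0 < w_max a < 1.
Proof.
  intros Ha; unfold w_max; split; [apply Rinv_0_lt_compat; lra|].
  rewrite <- Rinv_1; apply Rinv_lt_contravar; lra.
Qed.

Lemma h_a_nonneg a w : 0 <= w -> 0 <= h_a a w.
Proof. intros Hw; unfold h_a; pose proof (Rpower_pos (1 - w) a); nra. Qed.

Lemma h_max_pos a : 0 < a -> 0 < h_max a.
Proof.
  intros Ha; pose proof (w_max_bounds a Ha); unfold h_max, h_a.
  pose proof (Rpower_pos (1 - w_max a) a); nra.
Qed.

Lemma h_a_derive a w :
  w < 1 -> is_derive (h_a a) w (Rpower (1 - w) (a - 1) * (1 - (a + 1) * w)).
Proof.
  intros Hw; unfold h_a, Rpower; auto_derive; [lra|].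
  replace ((a - 1) * ln (1 - w)) with (a * ln (1 - w) + - ln (1 - w)) by ring.
  rewrite exp_plus, exp_Ropp, exp_ln by lra.
  replace (1 + - w) with (1 - w) by ring; field; lra.
Qed.

Lemma h_a_mvt a w1 w2 : w1 < w2 < 1 ->
  exists c, w1 < c < w2 /\
    h_a a w2 - h_a a w1 = Rpower (1 - c) (a - 1) * (1 - (a + 1) * c) * (w2 - w1).
Proof.
  intros Hw.
  destruct (MVT_cor2 (h_a a) (fun w => Rpower (1 - w) (a - 1) * (1 - (a + 1) * w)) w1 w2)
    as [c [Hc Hrange]]; [lra | | exists c; split; [lra | exact Hc]].
  intros c Hc; apply is_derive_Reals, h_a_derive; lra.
Qed.

Lemma h_a_strict_incr a w1 w2 :
  0 < a -> 0 <= w1 < w2 -> w2 <= w_max a -> h_a a w1 < h_a a w2.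
Proof.
  intros Ha Hw Hmax; pose proof (w_max_bounds a Ha).
  destruct (h_a_mvt a w1 w2) as [c [Hc E]]; [lra|].
  assert (Hsign : 0 < 1 - (a + 1) * c).
  { assert (c * (a + 1) < w_max a * (a + 1)) by (apply Rmult_lt_compat_r; lra).
    unfold w_max in *; rewrite Rinv_l in * by lra; lra. }
  pose proof (Rpower_pos (1 - c) (a - 1)).
  assert (0 < Rpower (1 - c) (a - 1) * (1 - (a + 1) * c) * (w2 - w1))
    by (repeat apply Rmult_lt_0_compat; lra).
  lra.
Qed.

Lemma h_a_le_max a w : 0 < a -> 0 <= w < 1 -> h_a a w <= h_max a.
Proof.
  intros Ha Hw; pose proof (w_max_bounds a Ha); unfold h_max.
  destruct (Rle_or_lt w (w_max a)) as [[Hlt | ->] | Hgt]; [| lra |].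
  - left; apply h_a_strict_incr; lra.
  - destruct (h_a_mvt a (w_max a) w) as [c [Hc E]]; [lra|].
    assert (Hsign : 1 - (a + 1) * c < 0).
    { assert (w_max a * (a + 1) < c * (a + 1)) by (apply Rmult_lt_compat_r; lra).
      unfold w_max in *; rewrite Rinv_l in * by lra; lra. }
    pose proof (Rpower_pos (1 - c) (a - 1)).
    assert (Rpower (1 - c) (a - 1) * (1 - (a + 1) * c) * (w - w_max a) < 0).
    { apply Rmult_neg_pos; [apply Rmult_pos_neg|]; lra. }
    lra.
Qed.

Lemma h_a_inj a w1 w2 : 0 < a ->
  0 <= w1 <= w_max a -> 0 <= w2 <= w_max a -> h_a a w1 = h_a a w2 -> w1 = w2.
Proof.
  intros Ha H1 H2 E; destruct (Rtotal_order w1 w2) as [L | [L | L]]; auto.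
  - pose proof (h_a_strict_incr a w1 w2 Ha ltac:(lra) ltac:(lra)); lra.
  - pose proof (h_a_strict_incr a w2 w1 Ha ltac:(lra) ltac:(lra)); lra.
Qed.

Lemma phi_h_a a y : 0 < y -> phi a y = h_a a (1 - y).
Proof.
  intros Hy; unfold phi, rpow, h_a.
  destruct (Req_EM_T y 0) as [E | _]; [lra|].
  replace (1 - (1 - y)) with y by ring.
  rewrite Rpower_plus, Rpower_1 by exact Hy; ring.
Qed.

Lemma x0_w_max a : 0 < a -> x0 a = 1 - w_max a.
Proof. intros Ha; unfold x0, w_max; field; lra. Qed.

Lemma le_limit_of_nonpos_derivative (K dK : R -> R) (L t : R) :
  0 < t ->
  (forall u, 0 < u <= t -> is_derive K u (dK u)) ->
  (forall u, 0 < u <= t -> dK u <= 0) ->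
  (forall eps, 0 < eps -> exists del, 0 < del /\
     forall u, 0 < u < del -> Rabs (K u - L) < eps) ->
  K t <= L.
Proof.
  intros Ht Hder Hsign Hlim.
  destruct (Rle_or_lt (K t) L) as [Hle | Hgt]; [exact Hle | exfalso].
  destruct (Hlim (K t - L)) as [del [Hdel Hclose]]; [lra|].
  set (u := Rmin del t / 2).
  assert (Hu : 0 < u < t /\ u < del).
  { pose proof (Rmin_l del t); pose proof (Rmin_r del t).
    assert (0 < Rmin del t) by (apply Rmin_glb_lt; lra); unfold u; lra. }
  destruct (MVT_cor2 K dK u t) as [c [Hc Hcu]]; [lra | |].
  - intros c Hc; apply is_derive_Reals, Hder; lra.
  - pose proof (Hsign c ltac:(lra)); specialize (Hclose u ltac:(lra)).
    apply Rabs_def2 in Hclose; nra.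
Qed.

(** The differential equation satisfied by the sum [F] of the series:
    [u F'(u) (1 - (a+1) F(u)) = F(u) (1 - F(u))].  Its residual is the
    quantity below. *)
Definition ode_residual (a : R) (F dF : R -> R) (u : R) : R :=
  u * dF u * (1 - (a + 1) * F u) - F u * (1 - F u).

(** Comparison principle: the sign of the residual decides on which side of
    [t] the value [h_a (F t)] lies, for [F] with [F 0 = 0], [F'(0) = 1]. *)
Section Comparison.

Variables (a : R) (F dF : R -> R) (t : R).
Hypothesis t_pos : 0 < t.
Hypothesis F_derive : forall u, 0 <= u <= t -> is_derive F u (dF u).
Hypothesis F_0 : F 0 = 0.
Hypothesis dF_0 : dF 0 = 1.
Hypothesis F_lt_1 : forall u, 0 <= u <= t -> F u < 1.

Lemma ratio_derive u : 0 < u <= t ->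
  is_derive (fun v => h_a a (F v) / v) u
    (Rpower (1 - F u) (a - 1) * ode_residual a F dF u / (u * u)).
Proof.
  intros Hu.
  assert (HF : F u < 1) by (apply F_lt_1; lra).
  pose proof (is_derive_comp (h_a a) F u _ _ (h_a_derive a (F u) HF)
                (F_derive u ltac:(lra))) as Hcomp.
  pose proof (is_derive_div _ _ u _ 1 Hcomp (is_derive_id u) ltac:(lra)) as Hdiv.
  eapply is_derive_ext; [intros; reflexivity|].
  match type of Hdiv with is_derive _ _ ?v => replace (_ / (u * u)) with v end;
    [exact Hdiv|].
  unfold h_a, ode_residual.
  replace (Rpower (1 - F u) a) with (Rpower (1 - F u) (a - 1) * (1 - F u))
    by (rewrite <- (Rpower_1 (1 - F u)) at 2 by lra; rewrite <- Rpower_plus; f_equal; ring).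
  change (scal (dF u) (Rpower (1 - F u) (a - 1) * (1 - (a + 1) * F u)))
    with (dF u * (Rpower (1 - F u) (a - 1) * (1 - (a + 1) * F u))).
  field; lra.
Qed.

(** [K u -> 1] as [u -> 0+], since [h_a (F u)] has derivative 1 at 0. *)
Lemma ratio_limit eps : 0 < eps -> exists del, 0 < del /\
  forall u, 0 < u < del -> Rabs (h_a a (F u) / u - 1) < eps.
Proof.
  intros Heps.
  assert (HF0 : F 0 < 1) by lra.
  pose proof (is_derive_comp (h_a a) F 0 _ _ (h_a_derive a (F 0) HF0)
                (F_derive 0 ltac:(lra))) as Hcomp.
  change (scal (dF 0) (Rpower (1 - F 0) (a - 1) * (1 - (a + 1) * F 0)))
    with (dF 0 * (Rpower (1 - F 0) (a - 1) * (1 - (a + 1) * F 0))) in Hcomp.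
  rewrite F_0, dF_0, Rminus_0_r in Hcomp.
  replace (1 * (Rpower 1 (a - 1) * (1 - (a + 1) * 0))) with 1 in Hcomp
    by (unfold Rpower; rewrite ln_1, Rmult_0_r, exp_0; ring).
  apply is_derive_Reals in Hcomp.
  destruct (Hcomp eps Heps) as [del Hdel].
  exists del; split; [apply cond_pos|].
  intros u Hu; specialize (Hdel u ltac:(lra) ltac:(rewrite Rabs_pos_eq; lra)).
  rewrite Rplus_0_l, F_0 in Hdel; unfold h_a at 2 in Hdel.
  rewrite Rmult_0_l, Rminus_0_r in Hdel; exact Hdel.
Qed.

(** A subsolution (residual [<= 0]) gives [h_a (F t) <= t]; a supersolution
    gives [t <= h_a (F t)] (apply the previous principle to [-K]). *)
Lemma h_a_below :
  (forall u, 0 < u <= t -> ode_residual a F dF u <= 0) -> h_a a (F t) <= t.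
Proof.
  intros Hres.
  assert (Hratio : h_a a (F t) / t <= 1).
  { apply (le_limit_of_nonpos_derivative _ _ 1 t t_pos ratio_derive); [|apply ratio_limit].
    intros u Hu; pose proof (Rpower_pos (1 - F u) (a - 1)); pose proof (Hres u Hu).
    unfold Rdiv; apply Rmult_le_0_r; [nra | left; apply Rinv_0_lt_compat; nra]. }
  apply Rmult_le_compat_r with (r := t) in Hratio; [|lra].
  unfold Rdiv in Hratio; rewrite Rmult_assoc, Rinv_l, Rmult_1_r in Hratio by lra; lra.
Qed.

Lemma h_a_above :
  (forall u, 0 < u <= t -> 0 <= ode_residual a F dF u) -> t <= h_a a (F t).
Proof.
  intros Hres.
  assert (Hratio : - (h_a a (F t) / t) <= - 1).
  { apply (le_limit_of_nonpos_derivative (fun v => - (h_a a (F v) / v))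
             (fun u => - (Rpower (1 - F u) (a - 1) * ode_residual a F dF u / (u * u)))
             (- 1) t t_pos).
    - intros u Hu; apply (is_derive_opp (fun v => h_a a (F v) / v)), ratio_derive, Hu.
    - intros u Hu; pose proof (Rpower_pos (1 - F u) (a - 1)); pose proof (Hres u Hu).
      assert (0 <= Rpower (1 - F u) (a - 1) * ode_residual a F dF u / (u * u)); [|lra].
      unfold Rdiv; apply Rmult_le_pos; [nra | left; apply Rinv_0_lt_compat; nra].
    - intros eps Heps; destruct (ratio_limit eps Heps) as [del [Hdel Hclose]].
      exists del; split; [exact Hdel|]; intros u Hu.
      replace (- (h_a a (F u) / u) - -1) with (- (h_a a (F u) / u - 1)) by ring.
      rewrite Rabs_Ropp; apply Hclose, Hu. }
  assert (Hge : 1 <= h_a a (F t) / t) by lra.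
  apply Rmult_le_compat_r with (r := t) in Hge; [|lra].
  unfold Rdiv in Hge; rewrite Rmult_assoc, Rinv_l, Rmult_1_r in Hge by lra; lra.
Qed.

End Comparison.

(** Reaching [w_max a] at some [t2] would force
    [h_max a = h_a (F t2) <= t2 < h_max a]. *)
Lemma subsolution_bound a F dF b :
  0 < a -> b <= h_max a ->
  (forall u, 0 <= u < b -> is_derive F u (dF u)) ->
  F 0 = 0 -> dF 0 = 1 ->
  (forall u v, 0 <= u <= v -> v < b -> F u <= F v) ->
  (forall u, 0 < u < b -> ode_residual a F dF u <= 0) ->
  forall t, 0 <= t < b -> F t < w_max a /\ h_a a (F t) <= t.
Proof.
  intros Ha Hb Hder H0 H1 Hmono Hres.
  pose proof (w_max_bounds a Ha) as Hw.
  assert (Hbelow : forall t, 0 <= t < b -> F t < w_max a).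
  { intros t Ht; destruct (Rlt_or_le (F t) (w_max a)) as [Hlt | Hge]; [exact Hlt|].
    exfalso.
    assert (Ht0 : 0 < t) by (destruct (Req_dec t 0) as [-> |]; lra).
    assert (Hreach : exists t2, 0 < t2 <= t /\ F t2 = w_max a).
    { destruct Hge as [Hgt | Heq]; [| exists t; split; lra].
      destruct (Ranalysis5.IVT_interv (fun u => F u - w_max a) 0 t) as [z [Hz Hzero]];
        [| lra | lra | lra |].
      - intros u Hu; apply continuity_pt_minus; [| apply continuity_pt_const; intros ? ?; auto].
        apply continuity_pt_filterlim, (ex_derive_continuous (V := R_NormedModule)).
        exists (dF u); apply Hder; lra.
      - exists z; split; [destruct (Req_dec z 0) as [-> |]|]; lra. }
    destruct Hreach as [t2 [Ht2 HF2]].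
    assert (Hle : h_a a (F t2) <= t2).
    { apply (h_a_below a F dF t2); try lra.
      - intros u Hu; apply Hder; lra.
      - intros u Hu; pose proof (Hmono u t2 ltac:(lra) ltac:(lra)); lra.
      - intros u Hu; apply Hres; lra. }
    rewrite HF2 in Hle; fold (h_max a) in Hle; lra. }
  intros t Ht; split; [apply Hbelow, Ht|].
  destruct (Req_dec t 0) as [-> | Ht0].
  - rewrite H0; unfold h_a; lra.
  - apply (h_a_below a F dF t); try lra.
    + intros u Hu; apply Hder; lra.
    + intros u Hu; pose proof (Hmono u t ltac:(lra) ltac:(lra)); pose proof (Hbelow t Ht); lra.
    + intros u Hu; apply Hres; lra.
Qed.

(** Sign of a series with terms of constant sign (convergent or not, since
    [Series] is a limit of partial sums in [Rbar]). *)
Lemma Series_nonneg (u : nat -> R) : (forall n, 0 <= u n) -> 0 <= Series u.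
Proof.
  intros Hu; unfold Series.
  assert (H : Rbar_le (Lim_seq (fun _ => 0)) (Lim_seq (sum_n u))).
  { apply Lim_seq_le_loc; exists 0%nat; intros n _.
    rewrite sum_n_Reals; apply cond_pos_sum, Hu. }
  rewrite Lim_seq_const in H; destruct (Lim_seq (sum_n u)); simpl in *; lra.
Qed.

Lemma Series_nonpos (u : nat -> R) : (forall n, u n <= 0) -> Series u <= 0.
Proof.
  intros Hu; rewrite <- (Ropp_involutive (Series u)), <- Series_opp.
  pose proof (Series_nonneg (fun n => - u n) ltac:(intros n; specialize (Hu n); lra)); lra.
Qed.

Lemma is_series_finite_support (u : nat -> R) N :
  (forall n, (N < n)%nat -> u n = 0) -> is_series u (sum_f_R0 u N).
Proof.
  intros Hu; apply (filterlim_ext_loc (fun _ => sum_f_R0 u N)); [|apply filterlim_const].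
  exists N; intros n Hn; rewrite sum_n_Reals.
  induction Hn as [| n Hn IH]; [reflexivity|].
  rewrite tech5, <- IH, Hu by lia; ring.
Qed.

Lemma CV_disk_le_radius (b : nat -> R) r : CV_disk b r -> Rbar_le r (CV_radius b).
Proof. intros H; destruct (Lub_Rbar_correct (CV_disk b)) as [Hub _]; exact (Hub r H). Qed.

Lemma ex_series_of_ex_pseries (b : nat -> R) t :
  ex_pseries b t -> ex_series (fun n => b n * t ^ n).
Proof.
  intros [l Hl]; exists l.
  eapply is_series_ext; [| exact Hl]; intros n; simpl; rewrite pow_n_pow.
  change (scal (t ^ n) (b n)) with (t ^ n * b n); ring.
Qed.

Lemma ex_series_inside (b : nat -> R) t :
  Rbar_lt (Rabs t) (CV_radius b) -> ex_series (fun n => b n * t ^ n).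
Proof. intros H; apply ex_series_of_ex_pseries, CV_radius_inside, H. Qed.

(** Coefficients dominated by [K (n + 1) |b n|] have at least the radius of
    [b], since multiplying by [n + 1] (differentiating) preserves it. *)
Lemma radius_le_of_weighted_bound (b v : nat -> R) K :
  (forall n, Rabs (v n) <= K * (INR n + 1) * Rabs (b n)) ->
  Rbar_le (CV_radius b) (CV_radius v).
Proof.
  intros Hdom; rewrite <- (CV_radius_incr_1 b), <- CV_radius_derive.
  destruct (Lub_Rbar_correct (CV_disk (PS_derive (PS_incr_1 b)))) as [_ Hlub].
  apply Hlub; intros r Hr; apply CV_disk_le_radius; unfold CV_disk in *.
  apply (ex_series_le (K := R_AbsRing) (V := R_CompleteNormedModule) _
           (fun n => K * Rabs (PS_derive (PS_incr_1 b) n * r ^ n)));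
    [| now apply (ex_series_scal_l K) in Hr].
  intros n; change (norm (Rabs (v n * r ^ n))) with (Rabs (Rabs (v n * r ^ n))).
  rewrite Rabs_Rabsolu; unfold PS_derive; simpl PS_incr_1.
  rewrite !Rabs_mult, S_INR, (Rabs_pos_eq (INR n + 1)) by (pose proof (pos_INR n); lra).
  pose proof (Rabs_pos (r ^ n)); specialize (Hdom n); nra.
Qed.

Definition residual_coef (a : R) (b : nat -> R) (n : nat) : R :=
  (INR n - 1) * b n - PS_mult b (fun k => ((a + 1) * INR k - 1) * b k) n.

Lemma pseries_ode_residual a (b : nat -> R) t :
  b 0%nat = 0 -> Rbar_lt (Rabs t) (CV_radius b) ->
  ode_residual a (PSeries b) (PSeries (PS_derive b)) t = PSeries (residual_coef a b) t.
Proof.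
  intros Hb0 Ht.
  set (db := fun n => INR n * b n).
  set (v := fun k => ((a + 1) * INR k - 1) * b k).
  assert (Hdb : t * PSeries (PS_derive b) t = PSeries db t).
  { rewrite <- PSeries_incr_1; apply PSeries_ext; intros [|n]; unfold db.
    - rewrite Hb0, Rmult_0_r; reflexivity.
    - reflexivity. }
  assert (Htdb : Rbar_lt (Rabs t) (CV_radius db)).
  { apply (Rbar_lt_le_trans _ _ _ Ht), (radius_le_of_weighted_bound b db 1).
    intros n; unfold db; rewrite Rabs_mult, Rabs_pos_eq by apply pos_INR.
    pose proof (Rabs_pos (b n)); pose proof (pos_INR n); nra. }
  assert (Htv : Rbar_lt (Rabs t) (CV_radius v)).
  { apply (Rbar_lt_le_trans _ _ _ Ht), (radius_le_of_weighted_bound b v (Rabs (a + 1) + 1)).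
    intros n; unfold v; rewrite Rabs_mult; apply Rmult_le_compat_r; [apply Rabs_pos|].
    pose proof (pos_INR n); pose proof (Rabs_pos (a + 1)).
    eapply Rle_trans; [apply Rabs_triang|].
    rewrite Rabs_Ropp, Rabs_R1, Rabs_mult, (Rabs_pos_eq (INR n)) by lra; nra. }
  assert (Hv : PSeries v t = (a + 1) * PSeries db t - PSeries b t).
  { unfold PSeries; rewrite <- Series_scal_l, <- Series_minus.
    - apply Series_ext; intros n; unfold v, db; ring.
    - exact (ex_series_scal_l (a + 1) _ (ex_series_inside db t Htdb)).
    - now apply ex_series_inside. }
  assert (Hprod : ex_series (fun n => PS_mult b v n * t ^ n))
    by now apply ex_series_of_ex_pseries, ex_pseries_mult.
  unfold ode_residual; rewrite Hdb.
  replace (PSeries db t * (1 - (a + 1) * PSeries b t) - PSeries b t * (1 - PSeries b t))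
    with (PSeries db t - PSeries b t - PSeries b t * ((a + 1) * PSeries db t - PSeries b t))
    by ring.
  rewrite <- Hv, <- PSeries_mult by auto; unfold PSeries.
  rewrite <- !Series_minus; try exact Hprod; try (apply ex_series_inside; auto).
  - apply Series_ext; intros n; unfold residual_coef, db, v; ring.
  - apply (ex_series_minus (V := R_NormedModule)); apply ex_series_inside; auto.
Qed.

Lemma pseries_nondecr (b : nat -> R) u v :
  (forall n, 0 <= b n) -> 0 <= u <= v -> ex_series (fun n => b n * v ^ n) ->
  PSeries b u <= PSeries b v.
Proof.
  intros Hb Huv Hv; apply Series_le; auto; intros n; split.
  - apply Rmult_le_pos; [auto | apply pow_le; lra].
  - apply Rmult_le_compat_l; [auto | apply pow_incr; lra].
Qed.

Lemma le_at_endpoint (f : R -> R) T M :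
  0 < T -> continuity_pt f T -> (forall t, 0 <= t < T -> f t <= M) -> f T <= M.
Proof.
  intros HT Hcont Hbound.
  destruct (Rle_or_lt (f T) M) as [Hle | Hgt]; [exact Hle | exfalso].
  destruct (Hcont (f T - M)) as [d [Hd Hclose]]; [lra|].
  set (t := Rmax 0 (T - d / 2)).
  assert (Ht : 0 <= t < T /\ Rabs (t - T) < d).
  { unfold t, Rmax; destruct (Rle_dec 0 (T - d / 2)); rewrite Rabs_left; lra. }
  assert (Hft : Rabs (f t - f T) < f T - M)
    by (apply (Hclose t); split; [split; [constructor | lra] | apply Ht]).
  specialize (Hbound t ltac:(lra)); apply Rabs_def2 in Hft; lra.
Qed.

Section TheSeries.

Variable a : R.
Hypothesis a_pos : 0 < a.

Definition trunc (N n : nat) : R := if (n <=? N)%nat then coef a n else 0.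

Lemma trunc_nonneg N n : 0 <= trunc N n.
Proof. unfold trunc; destruct (n <=? N)%nat; [apply coef_nonneg, a_pos | lra]. Qed.

Lemma trunc_vanish N n : (N < n)%nat -> trunc N n = 0.
Proof. intros Hn; unfold trunc; destruct (Nat.leb_spec n N); [lia | reflexivity]. Qed.

Lemma trunc_radius N t : Rbar_lt (Rabs t) (CV_radius (trunc N)).
Proof.
  apply (Rbar_lt_le_trans _ (Rabs t + 1)); [simpl; lra|].
  apply CV_disk_le_radius; eexists.
  apply (is_series_finite_support _ N); intros n Hn.
  rewrite trunc_vanish, Rmult_0_l, Rabs_R0 by exact Hn; reflexivity.
Qed.

Lemma trunc_pseries N t : PSeries (trunc N) t = sum_f_R0 (fun n => coef a n * t ^ n) N.
Proof.
  assert (Htail : forall n, (N < n)%nat -> trunc N n * t ^ n = 0)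
    by (intros n Hn; rewrite trunc_vanish by exact Hn; ring).
  unfold PSeries; rewrite (is_series_unique _ _ (is_series_finite_support _ N Htail)).
  apply sum_eq; intros n Hn; unfold trunc; destruct (Nat.leb_spec n N); [reflexivity | lia].
Qed.

Lemma residual_coef_coef n : residual_coef a (coef a) n = 0.
Proof. unfold residual_coef, PS_mult; rewrite coef_convolution; ring. Qed.

Lemma residual_coef_trunc N n : residual_coef a (trunc N) n <= 0.
Proof.
  unfold residual_coef, PS_mult.
  destruct (Nat.leb_spec n N) as [Hn | Hn].
  - rewrite (sum_eq _ (fun k => coef a k * (((a + 1) * INR (n - k) - 1) * coef a (n - k)))).
    + rewrite coef_convolution; unfold trunc; destruct (Nat.leb_spec n N); [lra | lia].
    + intros k Hk; unfold trunc.
      destruct (Nat.leb_spec k N), (Nat.leb_spec (n - k) N); [reflexivity | lia..].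
  - rewrite trunc_vanish, Rmult_0_r by exact Hn.
    enough (0 <= sum_f_R0 (fun k => trunc N k
                  * (((a + 1) * INR (n - k) - 1) * trunc N (n - k))) n) by lra.
    apply cond_pos_sum; intros k; apply Rmult_le_pos; [apply trunc_nonneg|].
    destruct (n - k)%nat as [|j]; [unfold trunc; simpl; lra|].
    apply Rmult_le_pos; [| apply trunc_nonneg].
    rewrite S_INR; pose proof (pos_INR j); nra.
Qed.

Lemma trunc_residual_nonpos N t :
  0 <= t -> ode_residual a (PSeries (trunc N)) (PSeries (PS_derive (trunc N))) t <= 0.
Proof.
  intros Ht; rewrite pseries_ode_residual by (reflexivity || apply trunc_radius).
  apply Series_nonpos; intros n.
  pose proof (residual_coef_trunc N n); pose proof (pow_le t n Ht); nra.
Qed.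

Lemma trunc_below_w_max N t : 0 <= t < h_max a -> PSeries (trunc N) t < w_max a.
Proof.
  intros Ht; pose proof (w_max_bounds a a_pos).
  destruct N as [|N]; [rewrite trunc_pseries; simpl; lra|].
  apply (subsolution_bound a _ (PSeries (PS_derive (trunc (S N)))) (h_max a));
    [exact a_pos | lra | | | | | | exact Ht].
  - intros u _; apply is_derive_PSeries, trunc_radius.
  - rewrite PSeries_0; reflexivity.
  - rewrite PSeries_0; unfold PS_derive, trunc; simpl Nat.leb; cbv iota.
    rewrite coef_1; simpl; ring.
  - intros u v Huv _; apply pseries_nondecr; [apply trunc_nonneg | exact Huv |].
    apply ex_series_inside, trunc_radius.
  - intros u Hu; apply trunc_residual_nonpos; lra.
Qed.

Lemma partial_sums_at_h_max N :
  sum_f_R0 (fun n => coef a n * h_max a ^ n) N <= w_max a.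
Proof.
  rewrite <- trunc_pseries; apply le_at_endpoint.
  - apply h_max_pos, a_pos.
  - apply PSeries_continuity, trunc_radius.
  - intros t Ht; left; apply trunc_below_w_max, Ht.
Qed.

Lemma coef_series_at_h_max : ex_series (fun n => coef a n * h_max a ^ n).
Proof.
  pose proof (h_max_pos a a_pos).
  destruct (ex_finite_lim_seq_incr (sum_n (fun n => coef a n * h_max a ^ n)) (w_max a))
    as [l Hl]; [| | exists l; exact Hl].
  - intros n; rewrite !sum_n_Reals, tech5.
    pose proof (coef_nonneg a (S n) a_pos); pose proof (pow_le (h_max a) (S n) ltac:(lra)).
    nra.
  - intros n; rewrite sum_n_Reals; apply partial_sums_at_h_max.
Qed.

Lemma pseries_at_h_max_le : PSeries (coef a) (h_max a) <= w_max a.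
Proof.
  change (Rbar_le (PSeries (coef a) (h_max a)) (w_max a)).
  apply (is_lim_seq_le (sum_n (fun n => coef a n * h_max a ^ n)) (fun _ => w_max a)
           _ (w_max a)); [| exact (Series_correct _ coef_series_at_h_max) | apply is_lim_seq_const].
  intros n; rewrite sum_n_Reals; apply partial_sums_at_h_max.
Qed.

Lemma coef_inside t : 0 <= t < h_max a -> Rbar_lt (Rabs t) (CV_radius (coef a)).
Proof.
  intros Ht; apply (Rbar_lt_le_trans _ (h_max a)); [simpl; rewrite Rabs_pos_eq; lra|].
  apply CV_disk_le_radius; unfold CV_disk.
  eapply ex_series_ext; [| exact coef_series_at_h_max]; intros n; symmetry.
  apply Rabs_pos_eq, Rmult_le_pos; [apply coef_nonneg, a_pos | apply pow_le; lra].
Qed.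

Lemma pseries_coef_nonneg t : 0 <= t -> 0 <= PSeries (coef a) t.
Proof.
  intros Ht; apply Series_nonneg; intros n.
  apply Rmult_le_pos; [apply coef_nonneg, a_pos | apply pow_le, Ht].
Qed.

(** Inside [[0, h_max a)], the sum is an exact solution of the equation, so
    the comparison principle applies in both directions. *)
Lemma pseries_inverse_interior t : 0 <= t < h_max a ->
  PSeries (coef a) t < w_max a /\ h_a a (PSeries (coef a) t) = t.
Proof.
  intros Ht; pose proof (w_max_bounds a a_pos).
  set (F := PSeries (coef a)); set (dF := PSeries (PS_derive (coef a))).
  assert (Hder : forall u, 0 <= u < h_max a -> is_derive F u (dF u))
    by (intros u Hu; apply is_derive_PSeries, coef_inside, Hu).
  assert (H0 : F 0 = 0) by (unfold F; rewrite PSeries_0; reflexivity).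
  assert (H1 : dF 0 = 1)
    by (unfold dF; rewrite PSeries_0; unfold PS_derive; rewrite coef_1; simpl; ring).
  assert (Hres : forall u, 0 <= u < h_max a -> ode_residual a F dF u = 0).
  { intros u Hu; unfold F, dF; rewrite pseries_ode_residual by (reflexivity || now apply coef_inside).
    rewrite (PSeries_ext _ (fun _ => 0)), PSeries_const_0; [reflexivity | apply residual_coef_coef]. }
  assert (Hsub := subsolution_bound a F dF (h_max a) a_pos (Rle_refl _) Hder H0 H1
    (fun u v Huv Hv => pseries_nondecr _ u v (fun n => coef_nonneg a n a_pos) Huv
                         (ex_series_inside _ _ (coef_inside v ltac:(lra))))
    (fun u Hu => Req_le _ _ (Hres u ltac:(lra)))).
  destruct (Hsub t Ht) as [Hlt Hle]; split; [exact Hlt|].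
  destruct (Req_dec t 0) as [-> | Ht0]; [rewrite H0; unfold h_a; ring|].
  apply Rle_antisym; [exact Hle|].
  apply (h_a_above a F dF t); try lra.
  - intros u Hu; apply Hder; lra.
  - intros u Hu; destruct (Hsub u ltac:(lra)); lra.
  - intros u Hu; rewrite Hres by lra; lra.
Qed.

(** At the endpoint: if the sum were below [w_max a], then [h_a] of it would
    be some [s < h_max a], contradicting monotonicity at any [t] in
    [(s, h_max a)]. *)
Lemma pseries_at_h_max : PSeries (coef a) (h_max a) = w_max a.
Proof.
  pose proof (w_max_bounds a a_pos); pose proof (h_max_pos a a_pos).
  set (F := PSeries (coef a)).
  assert (HF : 0 <= F (h_max a)) by (apply pseries_coef_nonneg; lra).
  destruct pseries_at_h_max_le as [Hlt | Heq]; [fold F in Hlt; exfalso | exact Heq].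
  assert (Hs : h_a a (F (h_max a)) < h_max a) by (apply h_a_strict_incr; auto; lra).
  pose proof (h_a_nonneg a _ HF).
  set (t := (h_a a (F (h_max a)) + h_max a) / 2).
  assert (Ht : 0 <= t < h_max a) by (unfold t; lra).
  destruct (pseries_inverse_interior t Ht) as [_ Heq]; fold F in Heq.
  assert (Hmono : F t <= F (h_max a))
    by (apply pseries_nondecr; [intros; apply coef_nonneg, a_pos | lra | exact coef_series_at_h_max]).
  assert (h_a a (F t) <= h_a a (F (h_max a))).
  { destruct Hmono as [Hm | ->]; [| lra].
    left; apply h_a_strict_incr; [exact a_pos | split; [apply pseries_coef_nonneg|]|]; lra. }
  unfold t in *; lra.
Qed.

Lemma pseries_inverse t : 0 <= t <= h_max a ->
  ex_series (fun n => coef a n * t ^ n) /\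
  0 <= PSeries (coef a) t <= w_max a /\ h_a a (PSeries (coef a) t) = t.
Proof.
  intros Ht; pose proof (w_max_bounds a a_pos).
  destruct (Req_dec t (h_max a)) as [-> | Hne].
  - rewrite pseries_at_h_max; repeat split; [exact coef_series_at_h_max | lra | lra].
  - destruct (pseries_inverse_interior t ltac:(lra)) as [Hlt Heq].
    pose proof (pseries_coef_nonneg t ltac:(lra)).
    repeat split; [apply ex_series_inside, coef_inside | lra | lra | exact Heq]; lra.
Qed.

End TheSeries.

Lemma phi_range a x : 0 < a -> 0 <= x <= 1 ->
  rpow x a * (1 - x) = phi a x /\ 0 <= phi a x <= h_max a.
Proof.
  intros Ha Hx; pose proof (h_max_pos a Ha).
  destruct (Req_dec x 0) as [-> | Hx0].
  - unfold phi, rpow; destruct (Req_EM_T 0 0) as [_ | ]; [lra | congruence].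
  - rewrite phi_h_a by lra; split; [| split; [apply h_a_nonneg | apply h_a_le_max]; lra].
    unfold rpow, h_a; destruct (Req_EM_T x 0) as [| _]; [lra|].
    replace (1 - (1 - x)) with x by ring; ring.
Qed.

Lemma right_branch_solution a t y : 0 < a -> 0 <= t <= h_max a ->
  x0 a <= y <= 1 -> phi a y = t -> y = 1 - PSeries (coef a) t.
Proof.
  intros Ha Ht Hy Hphi; pose proof (w_max_bounds a Ha).
  rewrite x0_w_max in Hy by exact Ha; rewrite phi_h_a in Hphi by lra.
  destruct (pseries_inverse a Ha t Ht) as [_ [HF Hinv]].
  enough (1 - y = PSeries (coef a) t) by lra.
  apply (h_a_inj a); [exact Ha | lra | exact HF | congruence].
Qed.

Lemma r_inv_pseries a t : 0 < a -> 0 <= t <= h_max a ->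
  r_inv a t = 1 - PSeries (coef a) t.
Proof.
  intros Ha Ht; pose proof (w_max_bounds a Ha).
  destruct (pseries_inverse a Ha t Ht) as [_ [HF Hinv]].
  assert (Hsol : x0 a <= 1 - PSeries (coef a) t <= 1 /\ phi a (1 - PSeries (coef a) t) = t).
  { rewrite x0_w_max, phi_h_a by lra; split; [lra|].
    replace (1 - (1 - PSeries (coef a) t)) with (PSeries (coef a) t) by ring; exact Hinv. }
  unfold r_inv; destruct (epsilon_spec (inhabits 0)
    (fun y => x0 a <= y <= 1 /\ phi a y = t) (ex_intro _ _ Hsol)) as [Hy Hphi].
  exact (right_branch_solution a t _ Ha Ht Hy Hphi).
Qed.

Lemma series_of_terms a x : 0 < a -> 0 <= x <= 1 ->
  ex_series (fun k => Rabs (term a x (S k))) /\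
  Series (fun k => term a x (S k)) = PSeries (coef a) (phi a x).
Proof.
  intros Ha Hx; destruct (phi_range a x Ha Hx) as [Hu Hrange].
  destruct (pseries_inverse a Ha _ Hrange) as [Hex _].
  assert (Hterm : forall k, term a x (S k) = coef a (S k) * phi a x ^ S k).
  { intros k; unfold term; rewrite Hu; replace (S k - 1)%nat with k by lia.
    unfold coef, Rdiv; ring. }
  split.
  - apply ex_series_incr_1 in Hex; eapply ex_series_ext; [| exact Hex].
    intros n; rewrite Hterm; symmetry; apply Rabs_pos_eq, Rmult_le_pos;
      [apply coef_nonneg, Ha | apply pow_le; lra].
  - rewrite (Series_ext _ _ Hterm); unfold PSeries.
    symmetry; apply Series_incr_1_aux; simpl; ring.
Qed.

Theorem proposition2 (a x : R) (ha : 0 < a) (hx : 0 <= x <= 1) :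
  ex_series (fun k => Rabs (term a x (S k))) /\
  1 - Series (fun k => term a x (S k)) = g_a a x /\
  (x <= x0 a -> 1 - Series (fun k => term a x (S k)) = f_a a x) /\
  (x0 a <= x -> 1 - Series (fun k => term a x (S k)) = x).
Proof.
  destruct (series_of_terms a x ha hx) as [Habs Hsum].
  destruct (phi_range a x ha hx) as [_ Hrange].
  assert (Hg : g_a a x = 1 - PSeries (coef a) (phi a x))
    by (apply r_inv_pseries; assumption).
  rewrite Hsum; split; [exact Habs | split; [| split]].
  - symmetry; exact Hg.
  - intros Hle; unfold f_a; destruct (Rle_dec x (x0 a)) as [_ | Hnot]; [|lra].
    symmetry; exact Hg.
  - intros Hge; symmetry; apply (right_branch_solution a); [exact ha | exact Hrange | lra | reflexivity].
Qed.
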